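(* Let $U\subseteq\mathbb{R}$ be open, let $\widetilde{H}\subseteq U$ be Lebesgue measurable and let $\varepsilon>0$. Then there is an open set $H\subseteq U$ such that $|\widetilde{H}\setminus H|=0$ and, for every bounded connected component $I=(a,b)$ of $H$, the point $a$ is a right density point of $\widetilde{H}$, the point $b$ is a left density point of $\widetilde{H}$, and for every $r\in(0,b-a)$ $$\max\Big\{\frac{|(a,a+r)\setminus\widetilde{H}|}{r},\ \frac{|(b-r,b)\setminus\widetilde{H}|}{r}\Big\}<\varepsilon.$$
   Context: $|A|$ denotes Lebesgue measure. A point $x$ is a right (resp. left) density point of a set $A$ if for every sequence of intervals $I_n=[x,x+r_n]$ (resp. $I_n=[x-r_n,x]$) with $r_n\searrow0$ we have $|A\cap I_n|/|I_n|\to1$. *)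

From mathcomp Require Import all_boot all_order all_algebra.
From mathcomp Require Import all_classical all_reals all_analysis.
Import Order.TTheory GRing.Theory Num.Theory numFieldNormedType.Exports.
Local Open Scope classical_set_scope.
Local Open Scope ring_scope.

(* Lebesgue measurable sets of R: the Caratheodory-measurable sets of the
   Lebesgue outer measure (= the completion of the Borel sigma-algebra). *)
Definition Lmeasurable {R : realType} (A : set R) : Prop :=
  ((@wlength R idfun)^*%mu).-cara.-measurable A.

Definition Lmeasure {R : realType} (A : set R) : \bar R :=
  completed_lebesgue_measure A.

Definition right_density_point {R : realType} (A : set R) (x : R) : Prop :=
  forall r : nat -> R,
    (forall n, 0 < r n) ->
    (forall m n, (m <= n)%N -> r n <= r m) ->
    r @ \oo --> (0 : R) ->
    (fun n => fine (Lmeasure (A `&` `[x, x + r n]%classic)) / r n) @ \oo --> (1 : R).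

Definition left_density_point {R : realType} (A : set R) (x : R) : Prop :=
  forall r : nat -> R,
    (forall n, 0 < r n) ->
    (forall m n, (m <= n)%N -> r n <= r m) ->
    r @ \oo --> (0 : R) ->
    (fun n => fine (Lmeasure (A `&` `[x - r n, x]%classic)) / r n) @ \oo --> (1 : R).

From mathcomp Require Import all_boot all_order all_algebra.
From mathcomp Require Import all_classical all_reals all_analysis.
From mathcomp Require Import lra ring.
Import Order.TTheory GRing.Theory Num.Theory numFieldNormedType.Exports.
Local Open Scope classical_set_scope.
Local Open Scope ring_scope.

(* Replace the Lebesgue measurable set by a Borel set A, contained in U, that
   differs from it by a null set. By Lebesgue's density theorem almost every
   point x of A is a point where ~` A has density zero. Near such an x, the
   set S of points of ~` A close to x has small measure, so by the
   Hardy-Littlewood maximal inequality most points y near x satisfy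
   M(1_S)(y) <= eta, i.e. |S ∩ (y - r, y + r)| <= 2 eta r for every r > 0.
   Choosing both endpoints of an interval around x among such density points
   gives arbitrarily short intervals ]a, b[ whose one-sided complement ratios
   stay below eps. Vitali's covering theorem selects countably many of them
   with pairwise disjoint closures covering almost all of A; their union is H,
   and disjointness of the closures makes them the components of H. *)

Section lebesgue_measure_facts.
Context {R : realType}.
Notation mu := (@lebesgue_measure R).

Lemma nbhs_right0_exists {P : R -> Prop} : (\forall r \near 0^'+, P r) ->
  exists2 d : R, 0 < d & forall r, 0 < r -> r < d -> P r.
Proof.
move=> [d /= d0 Pd]; exists d => // r r0 rd; apply: Pd => //=.
by rewrite sub0r normrN gtr0_norm.
Qed.

Lemma lebesgue_measure_fin_num {X Y : set R} :
  X `<=` Y -> (mu Y < +oo)%E -> mu X \is a fin_num.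
Proof.
by move=> XY Yoo; rewrite ge0_fin_numE// (le_lt_trans (le_outer_measure mu _ _ XY)).
Qed.

Lemma subset_lebesgue_measure0 {X Y : set R} :
  X `<=` Y -> mu Y = 0%E -> mu X = 0%E.
Proof.
move=> XY Y0; apply/eqP; rewrite eq_le measure_ge0 andbT -Y0.
exact: le_outer_measure.
Qed.

Lemma lebesgue_measureU0 {X Y : set R} :
  mu X = 0%E -> mu Y = 0%E -> mu (X `|` Y) = 0%E.
Proof.
move=> X0 Y0; have XY : (mu (X `|` Y) <= mu X + mu Y)%E := outer_measureU2 mu X Y.
by apply/eqP; rewrite eq_le measure_ge0 andbT (le_trans XY)// X0 Y0 adde0.
Qed.

Lemma fine_lebesgue_measure_lt (X : set R) (r c : R) :
  0 < r -> (mu X < (c * r)%:E)%E -> fine (mu X) / r < c.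
Proof.
move=> r0 Xcr; have Xfin : mu X \is a fin_num.
  by rewrite ge0_fin_numE// (lt_le_trans Xcr) ?leey.
by move: Xcr; rewrite -(fineK Xfin) lte_fin ltr_pdivrMr.
Qed.

Lemma fine_measureI_setC {A X : set R} {s : R} :
  measurable A -> measurable X -> mu X = s%:E ->
  fine (mu (A `&` X)) = s - fine (mu (~` A `&` X)).
Proof.
move=> mA mX Xs.
have fin Y : Y `<=` X -> mu Y \is a fin_num.
  by move=> YX; apply: lebesgue_measure_fin_num YX _; rewrite Xs ltry.
have : mu X = (mu (~` A `&` X) + mu (A `&` X))%E.
  by rewrite (measureDI mu mX mA) setDE setIC [X `&` A]setIC.
move: (fin _ (@subIsetr _ A X)) (fin _ (@subIsetr _ (~` A) X)).
move=> /fineK <- /fineK <-; rewrite Xs -EFinD => -[->].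
by rewrite /= addrC addKr.
Qed.

End lebesgue_measure_facts.

Section density_points.
Context {R : realType}.
Notation mu := (@lebesgue_measure R).

Definition density_point (A : set R) (x : R) := A x /\ forall th : R, 0 < th ->
  exists2 d : R, 0 < d & forall r, 0 < r -> r < d ->
    (mu (~` A `&` ball x r) <= (th * r)%:E)%E.

Lemma density_point_ae {A : set R} : measurable A ->
  exists N, [/\ measurable N, mu N = 0%E & A `\` density_point A `<=` N].
Proof.
move=> mA; have [N [mN N0 AN]] := lebesgue_density mA.
exists N; split => // x [Ax ndx]; apply: AN => /= dx; apply: ndx; split => // th th0.
move: dx; rewrite indicE mem_set// => /fine_cvgP[_ /cvgrPdist_lt].
have th2 : 0 < th / 2 by rewrite divr_gt0.
move=> /(_ _ th2)/nbhs_right0_exists[d d0 Hd].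
exists d => // r r0 rd.
have : `|1 - fine (mu (A `&` ball x r) / mu (ball x r))%E| < th / 2 := Hd r r0 rd.
have mB : measurable (ball x r) := measurable_realfun.measurable_ball x r.
have muB := lebesgue_measure_ball x (ltW r0).
have Bfin : (mu (ball x r) < +oo)%E by rewrite muB ltry.
have Cfin := lebesgue_measure_fin_num (@subIsetr _ (~` A) _) Bfin.
have Afin := lebesgue_measure_fin_num (@subIsetr _ A _) Bfin.
rewrite muB inver mulrn_eq0 (gt_eqF r0) /= -(fineK Afin) -EFinM /=.
rewrite (fine_measureI_setC mA mB muB) -[X in (X <= _)%E](fineK Cfin) lee_fin.
set c := fine _.
have r2 : 0 < r *+ 2 by rewrite mulrn_wgt0.
have c0 : 0 <= c by exact: fine_ge0 (measure_ge0 _ _).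
have -> : 1 - (r *+ 2 - c) / (r *+ 2) = c / (r *+ 2) by field; rewrite gt_eqF.
rewrite ger0_norm ?divr_ge0 ?(ltW r2)// ltr_pdivrMr// => /ltW.
by have -> : th / 2 * (r *+ 2) = th * r by rewrite mulr2n; field.
Qed.

Lemma density_point_cvg {A : set R} {y : R} {I : R -> set R} :
  measurable A -> density_point A y ->
  (forall s, 0 < s -> [/\ measurable (I s), mu (I s) = s%:E & I s `<=` ball y (s *+ 2)]) ->
  forall r : nat -> R, (forall n, 0 < r n) -> r @ \oo --> (0 : R) ->
  (fun n => fine (mu (A `&` I (r n))) / r n) @ \oo --> (1 : R).
Proof.
move=> mA [_ dy] HI r r0 r_cvg; apply/cvgrPdist_le => e e0.
have e2 : 0 < e / 2 by rewrite divr_gt0.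
have [d d0 Hd] := dy _ e2.
have d2 : 0 < d / 2 by rewrite divr_gt0.
move/cvgrPdist_lt : r_cvg => /(_ _ d2) r_small.
near=> n.
have [mI muI Isub] := HI _ (r0 n).
have rd : r n *+ 2 < d.
  near: n; apply: filterS r_small => m; rewrite sub0r normrN gtr0_norm// [r m *+ 2]mulr2n.
  lra.
have Ifin : (mu (I (r n)) < +oo)%E by rewrite muI ltry.
have Cfin := lebesgue_measure_fin_num (@subIsetr _ (~` A) _) Ifin.
have r2 : 0 < r n *+ 2 by rewrite mulrn_wgt0.
have := le_trans (le_outer_measure mu _ _ (@setIS _ (~` A) _ _ Isub)) (Hd _ r2 rd).
rewrite (fine_measureI_setC mA mI muI) -[X in (X <= _)%E](fineK Cfin) lee_fin.
set c := fine _.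
have c0 : 0 <= c by exact: fine_ge0 (measure_ge0 _ _).
have -> : 1 - (r n - c) / r n = c / r n by field; rewrite gt_eqF.
rewrite ger0_norm ?divr_ge0 ?(ltW (r0 n))// ler_pdivrMr//.
by have -> : e / 2 * (r n *+ 2) = e * r n by rewrite mulr2n; field.
Unshelve. all: by end_near.
Qed.

End density_points.

Section null_difference.
Context {R : realType}.
Notation mu := (@lebesgue_measure R).
Variables (B A : set R).
Hypotheses (BA : B `<=` A) (AB0 : mu (A `\` B) = 0%E).

Lemma lebesgue_measure_sandwich (X Y : set R) :
  X `<=` Y -> Y `<=` X `|` (A `\` B) -> mu X = mu Y.
Proof.
move=> XY YX; apply/eqP; rewrite eq_le le_outer_measure//=.
have XN : (mu (X `|` A `\` B) <= mu X + mu (A `\` B))%E := outer_measureU2 mu _ _.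
by rewrite (le_trans (le_outer_measure mu _ _ YX))// (le_trans XN)// AB0 adde0.
Qed.

Lemma lebesgue_measureI_null_diff (X : set R) : mu (B `&` X) = mu (A `&` X).
Proof.
apply: lebesgue_measure_sandwich; first exact: setSI.
by move=> z [Az Xz]; have [Bz|nBz] := pselect (B z); [left|right].
Qed.

Lemma lebesgue_measureD_null_diff (X : set R) : mu (X `\` B) = mu (X `\` A).
Proof.
apply/esym/lebesgue_measure_sandwich => [z [Xz nAz]|z [Xz nBz]].
  by split=> // /BA.
by have [Az|nAz] := pselect (A z); [right|left].
Qed.

Lemma density_point_right (y : R) : measurable A -> density_point A y ->
  right_density_point B y.
Proof.
move=> mA dy r r0 _ r_cvg.
have I_ok s : 0 < s -> [/\ measurable `[y, y + s]%classic,
    mu `[y, y + s]%classic = s%:E & `[y, y + s]%classic `<=` ball y (s *+ 2)].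
  move=> s0; split; first exact: measurable_itv.
    by rewrite lebesgue_measure_itv/= lte_fin ltrDl s0 -EFinD addrAC subrr add0r.
  move=> z; rewrite /= in_itv/= => /andP[yz zy].
  by rewrite /ball/= ltr_distlC; apply/andP; split; rewrite mulr2n; lra.
under eq_cvg do rewrite [Lmeasure _]lebesgue_measureI_null_diff.
exact: (density_point_cvg mA dy I_ok r r0 r_cvg).
Qed.

Lemma density_point_left (y : R) : measurable A -> density_point A y ->
  left_density_point B y.
Proof.
move=> mA dy r r0 _ r_cvg.
have I_ok s : 0 < s -> [/\ measurable `[y - s, y]%classic,
    mu `[y - s, y]%classic = s%:E & `[y - s, y]%classic `<=` ball y (s *+ 2)].
  move=> s0; split; first exact: measurable_itv.
    by rewrite lebesgue_measure_itv/= lte_fin ltrBlDr ltrDl s0 -EFinD opprB addrC subrK.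
  move=> z; rewrite /= in_itv/= => /andP[yz zy].
  by rewrite /ball/= ltr_distlC; apply/andP; split; rewrite mulr2n; lra.
under eq_cvg do rewrite [Lmeasure _]lebesgue_measureI_null_diff.
exact: (density_point_cvg mA dy I_ok r r0 r_cvg).
Qed.

End null_difference.

Section maximal_function.
Context {R : realType}.
Notation mu := (@lebesgue_measure R).

Lemma integral_abs_indic (S D : set R) : measurable S -> measurable D ->
  (\int[mu]_(y in D) `|(\1_S y)%:E| = mu (S `&` D))%E.
Proof.
move=> mS mD.
under eq_integral => y _ do rewrite gee0_abs ?lee_fin ?indicE ?ler0n//.
rewrite -(integral_indic mu mD mS); apply: eq_integral => y _.
by rewrite indicE.
Qed.

Lemma measure_ball_le_HL_maximal_indic (S : set R) (y r eta : R) :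
  measurable S -> 0 < r -> (HL_maximal \1_S y <= eta%:E)%E ->
  (mu (S `&` ball y r) <= (eta * (r *+ 2))%:E)%E.
Proof.
move=> mS r0 HL.
have : (iavg \1_S (ball y r) <= eta%:E)%E.
  apply: le_trans HL; apply: ereal_sup_ubound => /=.
  by exists r => //; rewrite in_itv/= r0.
have muB := lebesgue_measure_ball y (ltW r0).
have Bfin : (mu (ball y r) < +oo)%E by rewrite muB ltry.
have Sfin := lebesgue_measure_fin_num (@subIsetr _ S _) Bfin.
rewrite /iavg integral_abs_indic//; last exact: measurable_realfun.measurable_ball.
rewrite muB inver mulrn_eq0 (gt_eqF r0) /= -(fineK Sfin) -EFinM !lee_fin.
by rewrite -ler_pdivrMr ?mulrn_wgt0// mulrC.
Qed.

Lemma maximal_inequality_indic {S : set R} {eta : R} : measurable S -> 0 < eta ->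
  (mu [set y | (eta%:E < HL_maximal \1_S y)%E] <= (3 / eta)%:E * mu S)%E.
Proof.
move=> mS eta0.
have := maximal_inequality (locally_integrable_indic openT mS) eta0.
by rewrite /= integral_abs_indic// setIT.
Qed.

Lemma exists_density_point_HL_maximal_le (A S : set R) (c l s eta : R) :
  measurable A -> measurable S -> 0 < eta -> `]c, c + l[ `\` A `<=` S ->
  (mu S <= s%:E)%E -> (1 + 3 / eta) * s < l ->
  exists2 y, c < y < c + l &
    density_point A y /\ (HL_maximal \1_S y <= eta%:E)%E.
Proof.
move=> mA mS eta0 itvS Ss sl.
have [N [_ N0 AN]] := density_point_ae mA.
pose Bad := [set y | (eta%:E < HL_maximal \1_S y)%E].
have s0 : 0 <= s by rewrite -lee_fin (le_trans _ Ss).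
pose K := `]c, c + l[%classic.
have small : (mu (S `|` Bad `|` N) < mu K)%E.
  have U1 : (mu (S `|` Bad `|` N) <= mu (S `|` Bad) + mu N)%E := outer_measureU2 mu _ _.
  have U2 : (mu (S `|` Bad) <= mu S + mu Bad)%E := outer_measureU2 mu _ _.
  have Bad_s : (mu Bad <= (3 / eta * s)%:E)%E.
    rewrite (le_trans (maximal_inequality_indic mS eta0))// [in leRHS]EFinM.
    by rewrite lee_wpmul2l ?lee_fin// divr_ge0// ltW.
  rewrite lebesgue_measure_itv/= lte_fin ltrDl ifT; last first.
    by rewrite (le_lt_trans _ sl)// mulr_ge0// addr_ge0// divr_ge0// ltW.
  rewrite -EFinD addrAC subrr add0r; apply: (le_lt_trans U1); rewrite N0 adde0.
  apply: (le_lt_trans U2); apply: (le_lt_trans (leeD Ss Bad_s)).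
  by rewrite -EFinD lte_fin -[s in s + _]mul1r -mulrDl.
have [y [itv_y nSBNy]] : exists y, K y /\ ~ (S `|` Bad `|` N) y.
  apply: contrapT => /forallNP itvSBN; move: small; rewrite ltNge le_outer_measure//.
  by move=> z itv_z; apply: contrapT => nSBNz; exact: itvSBN z (conj itv_z nSBNz).
have Ay : A y by apply: contrapT => nAy; apply: nSBNy; left; left; exact: itvS.
exists y; first by move: itv_y; rewrite /K /= in_itv.
split; first by apply: contrapT => ndy; apply: nSBNy; right; exact: AN.
by rewrite leNgt; apply/negP => Bad_y; apply: nSBNy; left; right.
Qed.

End maximal_function.

Section admissible_intervals.
Context {R : realType}.
Notation mu := (@lebesgue_measure R).

Definition admissible_itv (A U : set R) (eps a b : R) :=
  [/\ a < b, density_point A a, density_point A b, `]a, b[%classic `<=` U &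
    forall r, 0 < r < b - a ->
      (mu (`]a, (a + r)%R[%classic `\` A) < (eps * r)%:E)%E /\
      (mu (`](b - r)%R, b[%classic `\` A) < (eps * r)%:E)%E].

(* With [eta < 1], the maximal inequality leaves less than [del / 2] of bad
   points: [(1 + 3 / eta) * (eta / 32) * (4 * del) = (eta + 3) * del / 8]. *)
Lemma exists_density_point_sparse_complement (A : set R) (x del eta eps c : R) :
  measurable A -> 0 < eta < 1 -> eta * 2 < eps -> 0 < del ->
  (mu (~` A `&` ball x (del * 4)) <= (eta / 32 * (del * 4))%:E)%E ->
  `]c, c + del / 2[%classic `<=` ball x (del * 4) ->
  exists2 y, c < y < c + del / 2 & density_point A y /\
    forall r, 0 < r -> (mu (~` A `&` ball x (del * 4) `&` ball y r) < (eps * r)%:E)%E.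
Proof.
move=> mA /andP[eta0 eta1] eta_eps del0 muS cJ.
have mS : measurable (~` A `&` ball x (del * 4)).
  by apply: measurableI; [exact: measurableC|exact: measurable_realfun.measurable_ball].
have [||y cy [dy HLy]] :=
  exists_density_point_HL_maximal_le _ _ c (del / 2) _ _ mA mS eta0 _ muS.
- by move=> z [itv_z nAz]; split; last exact: cJ.
- have -> : (1 + 3 / eta) * (eta / 32 * (del * 4)) = (eta + 3) * del / 8.
    by field; rewrite gt_eqF.
  nra.
exists y => //; split => // r r0.
apply: (le_lt_trans (measure_ball_le_HL_maximal_indic _ _ _ _ mS r0 HLy)).
by rewrite lte_fin mulr2n; nra.
Qed.

Lemma admissible_itv_around (A U : set R) (eps x e : R) :
  measurable A -> open U -> A `<=` U -> 0 < eps -> density_point A x -> 0 < e ->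
  exists a b, [/\ admissible_itv A U eps a b, a < x, x < b & b - a < e].
Proof.
move=> mA oU AU eps0 [Ax dx] e0.
have [dU dU0 ballU] := nbhs_right0_exists (open_subball oU (AU _ Ax)).
have [eta eta01 eta_eps] : exists2 eta, 0 < eta < 1 & eta * 2 < eps.
  have m0 : 0 < Order.min eps 1 by rewrite lt_min eps0 ltr01.
  have [me m1] : Order.min eps 1 <= eps /\ Order.min eps 1 <= 1.
    by rewrite !ge_min !lexx orbT.
  by exists (Order.min eps 1 / 4); [apply/andP; split|]; lra.
have [d d0 Hd] : exists2 d, 0 < d & forall r, 0 < r -> r < d ->
    (mu (~` A `&` ball x r) <= (eta / 32 * r)%:E)%E.
  by apply: dx; rewrite divr_gt0//; case/andP: eta01.
pose del := Order.min (Order.min d e) dU / 8.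
have [del0 del_d dele del_dU] : [/\ 0 < del, del * 4 < d, del * 2 < e & del < dU].
  have m0 : 0 < Order.min (Order.min d e) dU by rewrite !lt_min d0 e0 dU0.
  have [md me mdU] : [/\ Order.min (Order.min d e) dU <= d,
      Order.min (Order.min d e) dU <= e & Order.min (Order.min d e) dU <= dU].
    by rewrite !ge_min !lexx !orbT.
  by rewrite /del; split; lra.
have muS : (mu (~` A `&` ball x (del * 4)) <= (eta / 32 * (del * 4))%:E)%E.
  by apply: Hd => //; lra.
have sparse c := exists_density_point_sparse_complement A x del eta eps c mA
  eta01 eta_eps del0 muS.
pose good y := density_point A y /\
  forall r, 0 < r -> (mu (~` A `&` ball x (del * 4) `&` ball y r) < (eps * r)%:E)%E.
have [a /andP[a1 a2] [da HLa]] : exists2 a, x - del < a < x - del + del / 2 & good a.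
  apply: sparse => z; rewrite /= in_itv/= => /andP[z1 z2].
  by rewrite /ball/= ltr_distlC; apply/andP; split; lra.
have [b /andP[b1 b2] [db HLb]] : exists2 b, x + del / 2 < b < x + del / 2 + del / 2 & good b.
  apply: sparse => z; rewrite /= in_itv/= => /andP[z1 z2].
  by rewrite /ball/= ltr_distlC; apply/andP; split; lra.
exists a, b; split; [split => //|lra|lra|lra].
- lra.
- move=> z; rewrite /= in_itv/= => /andP[z1 z2].
  by apply: (ballU del) => //; rewrite /ball/= ltr_distlC; apply/andP; split; lra.
move=> r /andP[r0 rba]; split; [apply: le_lt_trans (HLa r r0)|apply: le_lt_trans (HLb r r0)];
  apply: le_outer_measure => z [/=]; rewrite in_itv/= => /andP[z1 z2] nAz;
  (split; first split => //); rewrite /ball/= ltr_distlC; apply/andP; split; lra.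
Qed.

End admissible_intervals.

Section open_intervals.
Context {R : realType}.
Notation mu := (@lebesgue_measure R).

Lemma itv_oo_ball (a b : R) :
  `]a, b[%classic = ball ((a + b) / 2) ((b - a) / 2).
Proof.
rewrite ball_itv.
have -> : (a + b) / 2 - (b - a) / 2 = a by field.
by have -> : (a + b) / 2 + (b - a) / 2 = b by field.
Qed.

Lemma closure_itv_oo (a b : R) : a < b -> closure `]a, b[%classic = `[a, b]%classic.
Proof.
move=> ab; rewrite itv_oo_ball closure_ballE closed_ball_itv; last by lra.
have -> : (a + b) / 2 - (b - a) / 2 = a by field.
by have -> : (a + b) / 2 + (b - a) / 2 = b by field.
Qed.

Lemma eq_itv_oo {a b a' b' : R} : a < b ->
  `]a, b[%classic = `]a', b'[%classic :> set R -> a = a' /\ b = b'.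
Proof.
move=> ab E.
have : `]a', b'[%classic ((a + b) / 2) by rewrite -E /= in_itv/=; apply/andP; split; lra.
rewrite /= in_itv/= => /andP[a'm mb']; have a'b' : a' < b' by lra.
split.
  have <- : inf `]a, b[%classic = a by rewrite inf_itv// bnd_simp.
  by rewrite E inf_itv// bnd_simp.
have <- : sup `]a, b[%classic = b by rewrite sup_itv// bnd_simp.
by rewrite E sup_itv// bnd_simp.
Qed.

Lemma connected_component_itv_oo (H : set R) (a b x : R) : a < x < b ->
  `]a, b[%classic `<=` H -> ~ H a -> ~ H b ->
  connected_component H x = `]a, b[%classic.
Proof.
move=> xab abH nHa nHb; apply/seteqP; split; last first.
  apply: connected_component_max; [by rewrite /= in_itv| exact: abH|].
  apply/connected_intervalP => u v; rewrite /= !in_itv/= => /andP[au _] /andP[_ vb] z.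
  move=> /andP[uz zv]; rewrite /= in_itv/=.
  by rewrite (lt_le_trans au uz) (le_lt_trans zv vb).
move=> y Hxy; have /connected_intervalP Hx_itv := @component_connected _ H x.
have Hxx : connected_component H x x.
  by apply: connected_component_refl; apply: abH; rewrite /= in_itv.
move: xab => /andP[ax xb]; rewrite /= in_itv/=; apply/andP; split.
- rewrite ltNge; apply/negP => ya; apply: nHa; apply: (connected_component_sub (x := x)).
  by apply: (Hx_itv y x Hxy Hxx); rewrite ya ltW.
- rewrite ltNge; apply/negP => by_; apply: nHb; apply: (connected_component_sub (x := x)).
  by apply: (Hx_itv x y Hxx Hxy); rewrite by_ ltW.
Qed.

Lemma connected_component_bigcup_itv_oo {I : Type} {D : set I} {a b : I -> R} {k x} :
  trivIset D (fun j => `[a j, b j]%classic) -> D k -> a k < x < b k ->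
  connected_component (\bigcup_(j in D) `]a j, b j[%classic) x = `]a k, b k[%classic.
Proof.
move=> trivD Dk /[dup] xk /andP[ax xb].
have notin y : `[a k, b k]%classic y -> ~ `]a k, b k[%classic y ->
    ~ (\bigcup_(j in D) `]a j, b j[%classic) y.
  move=> yk nyk [j Dj yj]; have jk : j = k.
    apply: trivD => //; exists y; split => //.
    by move: yj; rewrite /= !in_itv/= => /andP[? ?]; apply/andP; split; exact: ltW.
  by rewrite jk in yj.
apply: connected_component_itv_oo => //; first by move=> y; exists k.
- by apply: notin; rewrite /= in_itv/= ?lexx ?ltxx// (ltW (lt_trans ax xb)).
- by apply: notin; rewrite /= in_itv/= ?lexx ?ltxx ?andbF// (ltW (lt_trans ax xb)).
Qed.

Lemma setD_bigcup_itv_oo_null (E : set R) (D : set nat) (a b : nat -> R) :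
  mu (E `\` \bigcup_(k in D) `[a k, b k]%classic) = 0%E ->
  mu (E `\` \bigcup_(k in D) `]a k, b k[%classic) = 0%E.
Proof.
move=> null; apply: (subset_lebesgue_measure0
  (Y := (E `\` \bigcup_(k in D) `[a k, b k]%classic) `|` (range a `|` range b))).
  move=> z [Ez nHz]; have [[k Dk]|nkz] := pselect ((\bigcup_(k in D) `[a k, b k]%classic) z).
    rewrite /= in_itv/= !le_eqVlt => /andP[/orP[/eqP az|az] /orP[/eqP zb|zb]].
    - by right; left; exists k.
    - by right; left; exists k.
    - by right; right; exists k.
    - by exfalso; apply: nHz; exists k => //; rewrite /= in_itv/= az zb.
  by left; split.
apply: lebesgue_measureU0 null (lebesgue_measureU0 _ _).
  exact/countable_lebesgue_measure0/card_image_le.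
exact/countable_lebesgue_measure0/card_image_le.
Qed.

End open_intervals.

Section vitali_open_intervals.
Context {R : realType}.
Notation mu := (@lebesgue_measure R).
Variable P : R -> R -> Prop.

(* [vitali_theorem] needs a [nat]-indexed family: [k] codes rationals s, p, q, t
   and [rat_itv k] is some (a, b) with [P a b], s < a < p and q < b < t (or the
   junk value (0, 1) if there is none). *)
Let rat_box (k : nat) (ab : R * R) :=
  if @unpickle (rat * rat * rat * rat)%type k is Some (s, p, q, t) then
    [/\ P ab.1 ab.2, ab.1 < ab.2, ratr s < ab.1 < ratr p & ratr q < ab.2 < ratr t]
  else False.

Let rat_itv (k : nat) : R * R := xget (0, 1) (rat_box k).

Let rat_itv_oo (k : nat) : set R := `](rat_itv k).1, (rat_itv k).2[%classic.

Let rat_itv_lt k : (rat_itv k).1 < (rat_itv k).2.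
Proof.
rewrite /rat_itv; case: xgetP => [y -> |_]; last exact: ltr01.
by rewrite /rat_box; case: unpickle => // -[[[s p] q] t] [].
Qed.

Let rat_boxE k s p q t ab : unpickle k = Some (s, p, q, t) ->
  rat_box k ab =
    [/\ P ab.1 ab.2, ab.1 < ab.2, ratr s < ab.1 < ratr p & ratr q < ab.2 < ratr t].
Proof. by rewrite /rat_box => ->. Qed.

Let rat_itv_oo_radius k : 0 < (radius (rat_itv_oo k))%:num.
Proof. by rewrite /rat_itv_oo itv_oo_ball radius_ball_num; have := rat_itv_lt k; lra. Qed.

Let vitali_cover_rat_itv_oo (E : set R) :
  (forall x, E x -> forall e, 0 < e ->
    exists a b, [/\ P a b, a < x, x < b & b - a < e]) ->
  vitali_cover E rat_itv_oo [set k | rat_box k (rat_itv k)].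
Proof.
move=> Pfine; split => [k|x Ex e e0].
  by rewrite /rat_itv_oo itv_oo_ball; exact: is_ball_ball.
have [a [b [Pab ax xb bae]]] := Pfine x Ex e e0.
have [p] := rat_in_itvoo ax; rewrite in_itv/= => /andP[ap px].
have [q] := rat_in_itvoo xb; rewrite in_itv/= => /andP[xq qb].
have [ae be] : a - e / 2 < a /\ b < b + e / 2 by split; lra.
have [s] := rat_in_itvoo ae; rewrite in_itv/= => /andP[s_e sa].
have [t] := rat_in_itvoo be; rewrite in_itv/= => /andP[bt t_e].
move: (pickle (s, p, q, t)) (pickleK (s, p, q, t)) => k /rat_boxE kE.
have box_ab : rat_box k (a, b) by rewrite kE /= sa ap qb bt; split => //; lra.
have box_k : rat_box k (rat_itv k) := xgetI (0, 1) box_ab.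
have := box_k; rewrite kE => -[_ _ /andP[s_a' a'_p] /andP[q_b' b'_t]].
exists k; split => //; first by rewrite /rat_itv_oo /= in_itv/=; apply/andP; split; lra.
by rewrite /rat_itv_oo itv_oo_ball radius_ball_num; lra.
Qed.

Lemma vitali_itv_oo (E : set R) :
  (forall x, E x -> forall e, 0 < e ->
    exists a b, [/\ P a b, a < x, x < b & b - a < e]) ->
  exists (a b : nat -> R) (D : set nat),
    [/\ forall k, D k -> P (a k) (b k),
        trivIset D (fun k => `[a k, b k]%classic) &
        mu (E `\` \bigcup_(k in D) `]a k, b k[%classic) = 0%E].
Proof.
move=> /vitali_cover_rat_itv_oo/(vitali_theorem rat_itv_oo_radius)[D [_ DV trivD null]].
exists (fun k => (rat_itv k).1), (fun k => (rat_itv k).2), D; split.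
- by move=> k /DV; rewrite /= /rat_box; case: unpickle => // -[[[? ?] ?] ?] [].
- by move=> i j Di Dj; rewrite -!closure_itv_oo//; exact: trivD.
apply: setD_bigcup_itv_oo_null; rewrite -null; congr (mu (E `\` _)).
by apply: eq_bigcupr => k _; rewrite closure_itv_oo.
Qed.

End vitali_open_intervals.

Section lebesgue_measurable_hull.
Context {R : realType}.
Notation mu := (@lebesgue_measure R).

(* As functions on all sets, both are the Lebesgue outer measure. *)
Lemma LmeasureE (A : set R) : Lmeasure A = mu A.
Proof. by []. Qed.

Lemma Lmeasurable_hull (A : set R) : Lmeasurable A ->
  exists F : set R, [/\ measurable F, A `<=` F & mu (F `\` A) = 0%E].
Proof.
rewrite /Lmeasurable -completed_caratheodory_measurable g_sigma_completed_algebra_genE.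
move=> [B mB [N [C [mC C0 NC]] <-]].
exists (B `|` C); split; first exact: measurableU.
  by move=> x [Bx|Nx]; [left|right; apply: NC].
apply: subset_lebesgue_measure0 C0 => x [[Bx|//] nBNx].
by exfalso; apply: nBNx; left.
Qed.

End lebesgue_measurable_hull.

Lemma open_admissible_cover {R : realType} (A U : set R) (eps : R) :
  measurable A -> open U -> A `<=` U -> 0 < eps ->
  exists H : set R, [/\ open H, H `<=` U, lebesgue_measure (A `\` H) = 0%E &
    forall a b, (exists x, H x /\ connected_component H x = `]a, b[%classic) ->
      admissible_itv A U eps a b].
Proof.
move=> mA oU AU eps0.
have [a [b [D [adm trivD null]]]] :=
  vitali_itv_oo (admissible_itv A U eps) (density_point A)
    (fun x dx e => admissible_itv_around _ _ _ _ _ mA oU AU eps0 dx).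
have [N [_ N0 AN]] := density_point_ae mA.
exists (\bigcup_(k in D) `]a k, b k[%classic); split.
- by apply: bigcup_open => k _; exact: itv_open.
- by move=> z [k Dk]; have [_ _ _ kU _] := adm k Dk; exact: kU.
- apply: subset_lebesgue_measure0 (lebesgue_measureU0 N0 null) => z [Az nHz].
  by have [dz|ndz] := pselect (density_point A z); [right|left; apply: AN].
move=> a' b' [x [[k Dk kx] ccx]].
rewrite (connected_component_bigcup_itv_oo trivD Dk) in ccx.
  by have [abk _ _ _ _] := adm k Dk; have [<- <-] := eq_itv_oo abk ccx; exact: adm.
by move: kx; rewrite /= in_itv.
Qed.

Theorem lemma4p1 (R : realType) (U Ht : set R) (eps : R) :
  open U -> Ht `<=` U -> Lmeasurable Ht -> 0 < eps ->
  exists H : set R,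
    [/\ open H, H `<=` U, Lmeasure (Ht `\` H) = 0%E &
      forall a b : R,
        (exists x, H x /\ connected_component H x = `]a, b[%classic) ->
        [/\ right_density_point Ht a, left_density_point Ht b &
          forall r : R, 0 < r < b - a ->
            Num.max (fine (Lmeasure (`]a, a + r[%classic `\` Ht)) / r)
                    (fine (Lmeasure (`]b - r, b[%classic `\` Ht)) / r) < eps]].
Proof.
move=> oU HtU /Lmeasurable_hull[F [mF HtF F0]] eps0.
pose A := F `&` U.
have mA : measurable A by apply: measurableI => //; exact: measurable_realfun.open_measurable.
have HtA : Ht `<=` A by move=> z Hz; split; [exact: HtF|exact: HtU].
have A0 : lebesgue_measure (A `\` Ht) = 0%E.
  by apply: subset_lebesgue_measure0 F0 => z [[Fz _] nHtz].
have [H [oH HU AH0 adm]] :=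
  open_admissible_cover A U eps mA oU (@subIsetr _ _ _) eps0.
exists H; split => //.
  by rewrite LmeasureE; apply: subset_lebesgue_measure0 AH0; exact: setSD.
move=> a b /adm[_ da db _ bound]; split.
- exact: density_point_right Ht A HtA A0 a mA da.
- exact: density_point_left Ht A HtA A0 b mA db.
move=> r /[dup] /andP[r0 _] /bound[lt_a lt_b].
rewrite gt_max !LmeasureE !(lebesgue_measureD_null_diff Ht A HtA A0).
by rewrite !fine_lebesgue_measure_lt.
Qed.
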